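(* Let $N\ge 4$ be an integer and $a>0$ real. Let $H=H^{(N)}(a)$ be the real $N\times N$ tridiagonal matrix with $H_{nn}=a+2n-1$, $H_{n,n+1}=-n$, $H_{n+1,n}=-(a+n)$, all other entries zero, and write $D_n(a)=\prod_{j=1}^{n-1}(a+j)$. Then there exists a real symmetric heptadiagonal (bandwidth $3$) $N\times N$ matrix $\mathcal P_3=\mathcal P_3^{(N)}(a)$ with $H^\dagger\mathcal P_3=\mathcal P_3H$ whose entries are $(\mathcal P_3)_{11}=(\mathcal P_3)_{12}=(\mathcal P_3)_{13}=(\mathcal P_3)_{22}=0$, $(\mathcal P_3)_{14}=1$, $$(\mathcal P_3)_{nn}=-\frac{2(n-1)(n-2)\,(n-1)!\,(3a+5n-6)}{3D_n(a)}\quad(n=2,\dots,N-1),$$ $$(\mathcal P_3)_{n,n+1}=\frac{(n-1)\,n!\,(a+5n-7)}{2D_n(a)}\quad(n=2,\dots,N-2),\qquad (\mathcal P_3)_{n,n+2}=-\frac{(n-1)\,(n+1)!}{D_n(a)}\quad(n=2,\dots,N-2),$$ $$(\mathcal P_3)_{n,n+3}=\frac{(n+2)!}{6D_n(a)}\quad(n=2,\dots,N-3),$$ (the remaining entries $(\mathcal P_3)_{N-1,N}=(\mathcal P_3)_{N,N-1}$ and $(\mathcal P_3)_{NN}$ being some real numbers depending on $N$ and $a$). Consequently, with $\Theta_0,\mathcal P_1,\mathcal P_2$ as in the context, for all real $\alpha,\beta,\gamma$ the matrix $\Theta_3=\Theta_0+\alpha\mathcal P_1+\beta\mathcal P_2+\gamma\mathcal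 P_3$ satisfies $H^\dagger\Theta_3=\Theta_3H$, and it is a positive definite metric for $H$ whenever $|\alpha|,|\beta|,|\gamma|$ are sufficiently small.
   Context: $H^\dagger$ is the conjugate transpose. A metric for $H$ is a positive definite Hermitian matrix $\Theta$ with $H^\dagger\Theta=\Theta H$. $\Theta_0$ is the diagonal matrix with $(\Theta_0)_{nn}=(n-1)!/D_n(a)$; $\mathcal P_1$ is the real symmetric tridiagonal matrix with $(\mathcal P_1)_{11}=0$, $(\mathcal P_1)_{nn}=-2(n-1)(n-1)!/D_n(a)$ for $n\ge2$, $(\mathcal P_1)_{n,n+1}=(\mathcal P_1)_{n+1,n}=n!/D_n(a)$; $\mathcal P_2$ is any real symmetric pentadiagonal matrix with $H^\dagger\mathcal P_2=\mathcal P_2H$. All of $\Theta_0,\mathcal P_1,\mathcal P_2$ satisfy $H^\dagger X=XH$. Symmetric entries are understood: $(\mathcal P_3)_{ji}=(\mathcal P_3)_{ij}$. *)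

(* Real matrices over an abstract R : realType.
   Paper indices n = 1..N correspond to ordinals i : 'I_N with n = i.+1. *)
From mathcomp Require Import all_boot all_order all_algebra.
From mathcomp Require Import reals.
Set Implicit Arguments. Unset Strict Implicit. Unset Printing Implicit Defensive.
Import Order.TTheory GRing.Theory Num.Theory.
Local Open Scope ring_scope.

Section Defs.
Variable R : realType.

Definition Dn (a : R) (n : nat) : R := \prod_(1 <= j < n) (a + j%:R).

Definition Hmat (N : nat) (a : R) : 'M[R]_N :=
  \matrix_(i < N, j < N)
    (if j == i then a + (2 * i.+1 - 1)%:R
     else if j.+1 == i.+2 then - (i.+1)%:R          (* (n, n+1), n = i+1 *)
     else if i.+1 == j.+2 then - (a + (j.+1)%:R)    (* (m+1, m), m = j+1 *)
     else 0).

(* H^dagger X = X H ; for a real matrix H^dagger is the transpose *)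
Definition intertwines (N : nat) (H X : 'M[R]_N) : Prop := H^T *m X = X *m H.

Definition sym_mx (N : nat) (X : 'M[R]_N) : Prop := X^T = X.

Definition banded (N : nat) (k : nat) (X : 'M[R]_N) : Prop :=
  forall i j : 'I_N, ((i + k < j)%N || (j + k < i)%N) -> X i j = 0.

Definition posdef (N : nat) (X : 'M[R]_N) : Prop :=
  sym_mx X /\ forall x : 'cV[R]_N, x != 0 -> 0 < (x^T *m X *m x) ord0 ord0.

Definition is_metric (N : nat) (H X : 'M[R]_N) : Prop :=
  posdef X /\ intertwines H X.

Definition Theta0 (N : nat) (a : R) : 'M[R]_N :=
  \matrix_(i < N, j < N) (if j == i then (i`!)%:R / Dn a i.+1 else 0).

Definition P1mat (N : nat) (a : R) : 'M[R]_N :=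
  \matrix_(i < N, j < N)
    (if j == i then (if i == 0%N :> nat then 0
                     else - ((2 * i * i`!)%:R / Dn a i.+1))
     else if j.+1 == i.+2 then (i.+1)`!%:R / Dn a i.+1
     else if i.+1 == j.+2 then (j.+1)`!%:R / Dn a j.+1
     else 0).

Definition P3_entries (N : nat) (a : R) (P : 'M[R]_N) : Prop :=
  (forall i j : 'I_N, (i = 0 :> nat)%N -> (j = 0 :> nat)%N -> P i j = 0) /\
  (forall i j : 'I_N, (i = 0 :> nat)%N -> (j = 1 :> nat)%N -> P i j = 0) /\
  (forall i j : 'I_N, (i = 0 :> nat)%N -> (j = 2 :> nat)%N -> P i j = 0) /\
  (forall i j : 'I_N, (i = 1 :> nat)%N -> (j = 1 :> nat)%N -> P i j = 0) /\
  (forall i j : 'I_N, (i = 0 :> nat)%N -> (j = 3 :> nat)%N -> P i j = 1) /\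
  (forall i j : 'I_N, let n := i.+1 in (j = i :> nat) ->
     (2 <= n)%N -> (n <= N - 1)%N ->
     P i j = - ((2 * (n - 1) * (n - 2) * (n - 1)`!)%:R
                * (3 * a + (5 * n - 6)%:R) / (3 * Dn a n))) /\
  (forall i j : 'I_N, let n := i.+1 in (j = i.+1 :> nat) ->
     (2 <= n)%N -> (n <= N - 2)%N ->
     P i j = ((n - 1) * n`!)%:R * (a + (5 * n - 7)%:R) / (2 * Dn a n)) /\
  (forall i j : 'I_N, let n := i.+1 in (j = i.+2 :> nat) ->
     (2 <= n)%N -> (n <= N - 2)%N ->
     P i j = - (((n - 1) * n.+1`!)%:R / Dn a n)) /\
  (forall i j : 'I_N, let n := i.+1 in (j = i.+3 :> nat) ->
     (2 <= n)%N -> (n <= N - 3)%N ->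
     P i j = n.+2`!%:R / (6 * Dn a n)).

End Defs.

(* The diagonal matrix Theta0 symmetrizes the tridiagonal H (detailed balance),
   i.e. H^T Theta0 = Theta0 H.  Hence Theta0 p(H) is symmetric and intertwines H
   for every polynomial p, and a polynomial of degree k in H has bandwidth k.
   With L_k^(a) the generalized Laguerre polynomials, P1 = Theta0 L_1^(a)(H) and
   P3 := Theta0 L_3^(a)(H) has the prescribed entries, read off from the
   tridiagonal structure of H.  Finally Theta0 is positive diagonal, and for a
   positive diagonal D the form of any perturbation P satisfies
   |x^T P x| <= (sum_ij |P_ij|) (sum_i 1/D_ii) x^T D x, so D + P stays positive
   definite when P is small. *)

From mathcomp Require Import all_boot all_order all_algebra.
From mathcomp Require Import reals.
From mathcomp Require Import ring lra zify.
Set Implicit Arguments. Unset Strict Implicit. Unset Printing Implicit Defensive.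
Import Order.TTheory GRing.Theory Num.Theory.
Local Open Scope ring_scope.

Section MatrixPolynomials.
Variables (R : realType) (N : nat).
Implicit Types (H T X Y : 'M[R]_N) (cs : seq R).

Lemma banded_mono k l X : (k <= l)%N -> banded k X -> banded l X.
Proof. by move=> kl bX i j h; apply: bX; case/orP: h => h; apply/orP; lia. Qed.

Lemma banded_add k X Y : banded k X -> banded k Y -> banded k (X + Y).
Proof. by move=> bX bY i j h; rewrite mxE bX // bY // addr0. Qed.

Lemma banded_scalar_mx c : banded 0 (c%:M : 'M[R]_N).
Proof. by move=> i j h; rewrite mxE; case: eqP => // ij; subst; lia. Qed.

Lemma banded_diag_mx (d : 'rV[R]_N) : banded 0 (diag_mx d).
Proof. by move=> i j h; rewrite mxE; case: eqP => // ij; subst; lia. Qed.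

Lemma banded_mulmx k l X Y : banded k X -> banded l Y -> banded (k + l) (X *m Y).
Proof.
move=> bX bY i j hij; rewrite mxE big1 // => m _.
have [km|mk] := boolP ((i + k < m)%N || (m + k < i)%N); first by rewrite bX ?mul0r.
by rewrite bY ?mulr0 //; case/orP: hij => h; apply/orP; [left|right]; lia.
Qed.

(* ['M_N] is a ring only for positive [N], so [horner_mx] does not apply. *)
Definition mxhorner cs H : 'M[R]_N := foldr (fun c Q => c%:M + H *m Q) 0 cs.

Lemma mxhorner_cons c cs H : mxhorner (c :: cs) H = c%:M + H *m mxhorner cs H.
Proof. by []. Qed.

Lemma mxhorner_comm cs H : H *m mxhorner cs H = mxhorner cs H *m H.
Proof.
elim: cs => [|c cs IH] /=; first by rewrite mulmx0 mul0mx.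
by rewrite mulmxDr mulmxDl mul_mx_scalar mul_scalar_mx -mulmxA IH mulmxA.
Qed.

Lemma banded_mxhorner k c cs H :
  (size cs <= k)%N -> banded 1 H -> banded k (mxhorner (c :: cs) H).
Proof.
move=> cs_k bH; apply: banded_mono cs_k _; elim: cs c {k} => [|c' cs IH] c /=.
  by rewrite mulmx0 addr0; exact: banded_scalar_mx.
apply: banded_add; first exact: banded_mono (banded_scalar_mx c).
exact: banded_mulmx bH (IH c').
Qed.

Lemma intertwinesD H X Y : intertwines H X -> intertwines H Y -> intertwines H (X + Y).
Proof. by rewrite /intertwines => hX hY; rewrite mulmxDr mulmxDl hX hY. Qed.

Lemma intertwinesZ H c X : intertwines H X -> intertwines H (c *: X).
Proof. by rewrite /intertwines => hX; rewrite -scalemxAr -scalemxAl hX. Qed.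

Lemma sym_mxD X Y : sym_mx X -> sym_mx Y -> sym_mx (X + Y).
Proof. by rewrite /sym_mx => hX hY; rewrite linearD /= hX hY. Qed.

Lemma sym_mxZ c X : sym_mx X -> sym_mx (c *: X).
Proof. by rewrite /sym_mx => hX; rewrite linearZ /= hX. Qed.

Section Intertwiner.
Variables (H T : 'M[R]_N).
Hypotheses (symT : sym_mx T) (HT : intertwines H T).

Lemma intertwines_mulmx_comm Q : H *m Q = Q *m H -> intertwines H (T *m Q).
Proof. by rewrite /intertwines => HQ; rewrite mulmxA HT -!mulmxA HQ. Qed.

Lemma intertwines_mulmx_mxhorner cs : intertwines H (T *m mxhorner cs H).
Proof. exact/intertwines_mulmx_comm/mxhorner_comm. Qed.

Lemma sym_mx_mulmx_mxhorner cs : sym_mx (T *m mxhorner cs H).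
Proof.
rewrite /sym_mx; elim: cs => [|c cs IH] /=; first by rewrite mulmx0 trmx0.
set Q := mxhorner cs H in IH *.
rewrite mulmxDr mul_mx_scalar linearD linearZ /= symT; congr (_ + _).
by rewrite mxhorner_comm mulmxA trmx_mul IH mulmxA HT -!mulmxA mxhorner_comm.
Qed.

End Intertwiner.
End MatrixPolynomials.

Section DiagonalPerturbation.
Variables (R : realType) (N : nat).
Implicit Types (X Y P : 'M[R]_N) (x : 'cV[R]_N).

Definition qform X x : R := (x^T *m X *m x) ord0 ord0.

Definition mx_abs_sum X : R := \sum_i \sum_j `|X i j|.

Lemma qformE X x : qform X x = \sum_j \sum_i x i ord0 * X i j * x j ord0.
Proof.
rewrite /qform mxE; apply: eq_bigr => j _; rewrite mxE mulr_suml.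
by apply: eq_bigr => i _; rewrite mxE.
Qed.

Lemma qformD X Y x : qform (X + Y) x = qform X x + qform Y x.
Proof. by rewrite /qform mulmxDr mulmxDl mxE. Qed.

Lemma mx_abs_sum_ge0 X : 0 <= mx_abs_sum X.
Proof. by apply: sumr_ge0 => i _; apply: sumr_ge0. Qed.

Lemma mx_abs_sumD X Y : mx_abs_sum (X + Y) <= mx_abs_sum X + mx_abs_sum Y.
Proof.
rewrite /mx_abs_sum -big_split ler_sum // => i _.
by rewrite -big_split ler_sum // => j _; rewrite mxE ler_normD.
Qed.

Lemma mx_abs_sumZ c X : mx_abs_sum (c *: X) = `|c| * mx_abs_sum X.
Proof.
rewrite /mx_abs_sum mulr_sumr; apply: eq_bigr => i _.
by rewrite mulr_sumr; apply: eq_bigr => j _; rewrite mxE normrM.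
Qed.

Variable d : 'rV[R]_N.
Hypothesis d_gt0 : forall i, 0 < d 0 i.
Let D := diag_mx d.
Let K := \sum_i (d 0 i)^-1.

Lemma qform_diag_mx x : qform D x = \sum_i d 0 i * x i ord0 ^+ 2.
Proof.
rewrite qformE; apply: eq_bigr => j _.
rewrite (bigD1 j) //= big1 ?addr0 => [|i ij]; last first.
  by rewrite mxE (negbTE ij) mulr0n mulr0 mul0r.
by rewrite mxE eqxx mulr1n mulrAC -expr2 mulrC.
Qed.

Lemma sqr_le_qform_diag x k : x k ord0 ^+ 2 <= K * qform D x.
Proof.
have dk_neq0 : d 0 k != 0 by rewrite gt_eqF.
have dinv_ge0 i : 0 <= (d 0 i)^-1 by rewrite invr_ge0 ltW.
have term_ge0 i : 0 <= d 0 i * x i ord0 ^+ 2 by rewrite mulr_ge0 ?sqr_ge0 ?ltW.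
rewrite qform_diag_mx -[leLHS](mulKf dk_neq0).
apply: ler_pM; rewrite ?term_ge0 ?dinv_ge0 //.
- by rewrite /K (bigD1 k) //= lerDl sumr_ge0.
- by rewrite (bigD1 k) //= lerDl sumr_ge0.
Qed.

Lemma normr_qform_le P x : `|qform P x| <= mx_abs_sum P * (K * qform D x).
Proof.
rewrite qformE /mx_abs_sum exchange_big mulr_suml /=.
apply: le_trans (ler_norm_sum _ _ _) _; apply: ler_sum => j _.
rewrite mulr_suml; apply: le_trans (ler_norm_sum _ _ _) _; apply: ler_sum => i _.
rewrite mulrAC normrM mulrC ler_wpM2l //.
have := sqr_le_qform_diag x i; have := sqr_le_qform_diag x j.
by move=> hj hi; rewrite ler_norml; apply/andP; split; nra.
Qed.

Lemma qform_diag_gt0 x : x != 0 -> 0 < qform D x.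
Proof.
move=> x_neq0; have [k xk_neq0] : exists k, x k ord0 != 0.
  apply/existsP; apply: contraR x_neq0; rewrite negb_exists => /forallP x0.
  by apply/eqP/matrixP => i j; rewrite (ord1 j) mxE; apply/eqP; rewrite -[_ == _]negbK x0.
rewrite qform_diag_mx (bigD1 k) //= ltr_pwDl //.
  by rewrite mulr_gt0 // exprn_even_gt0 ?xk_neq0 ?orbT.
by rewrite sumr_ge0 // => i _; rewrite mulr_ge0 ?sqr_ge0 ?ltW.
Qed.

Lemma posdef_diag_addr P : sym_mx P -> mx_abs_sum P * K < 1 -> posdef (D + P).
Proof.
move=> symP small; split; first by rewrite /sym_mx linearD /= tr_diag_mx symP.
move=> x x_neq0; have Dx_gt0 := qform_diag_gt0 x_neq0.
have := normr_qform_le P x; rewrite ler_norml mulrA => /andP[lowP _].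
rewrite -/(qform _ x) qformD; nra.
Qed.

Lemma posdef_diag_small_perturbation P1 P2 P3 :
  sym_mx P1 -> sym_mx P2 -> sym_mx P3 ->
  exists2 eps : R, 0 < eps & forall c1 c2 c3 : R,
    `|c1| < eps -> `|c2| < eps -> `|c3| < eps ->
    posdef (D + c1 *: P1 + c2 *: P2 + c3 *: P3).
Proof.
move=> sym1 sym2 sym3.
pose S := mx_abs_sum P1 + mx_abs_sum P2 + mx_abs_sum P3.
have K_ge0 : 0 <= K by rewrite sumr_ge0 // => i _; rewrite invr_ge0 ltW.
have SK_ge0 : 0 <= S * K by rewrite mulr_ge0 // !addr_ge0 ?mx_abs_sum_ge0.
exists (S * K + 1)^-1 => [|c1 c2 c3 h1 h2 h3]; first by rewrite invr_gt0 ltr_wpDl.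
rewrite -!addrA; apply: posdef_diag_addr.
  by apply: sym_mxD; [|apply: sym_mxD]; apply: sym_mxZ.
set e := (S * K + 1)^-1 in h1 h2 h3.
have eSK : e * (S * K) < 1.
  by rewrite /e mulrC ltr_pdivrMr ?mul1r ?ltrDl ?ltr_wpDl.
have Ssum_le : mx_abs_sum (c1 *: P1 + (c2 *: P2 + c3 *: P3)) <= e * S.
  rewrite /S !mulrDr -addrA; apply: le_trans (mx_abs_sumD _ _) _.
  have termle c P : `|c| < e -> mx_abs_sum (c *: P) <= e * mx_abs_sum P.
    by move=> ce; rewrite mx_abs_sumZ ler_wpM2r ?mx_abs_sum_ge0 ?ltW.
  rewrite lerD ?termle //; apply: le_trans (mx_abs_sumD _ _) _.
  by rewrite lerD ?termle.
by apply: le_lt_trans eSK; rewrite mulrA ler_wpM2r.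
Qed.
End DiagonalPerturbation.

Lemma sum_ord_if_eq (R : zmodType) (N m : nat) (F : nat -> R) :
  \sum_(k < N) (if (k : nat) == m then F k else 0) = if (m < N)%N then F m else 0.
Proof.
elim: N => [|N IH]; first by rewrite big_ord0.
rewrite big_ord_recr /= IH; case: eqP => [->|mN]; first by rewrite ltnn ltnSn add0r.
by rewrite addr0; case: ltnP => h1; case: ltnP => h2 //; lia.
Qed.

Section LaguerreMetric.
Variables (R : realType) (N : nat) (a : R).
Local Notation H := (Hmat N a).

Definition Hentry (i j : nat) : R :=
  if j == i then a + (2 * i + 1)%:R
  else if j == i.+1 then - (i.+1)%:R
  else if i == j.+1 then - (a + (j.+1)%:R)
  else 0.

Lemma HmatE : H = \matrix_(i, j) Hentry i j.
Proof.
apply/matrixP => i j; rewrite !mxE /Hentry.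
by have -> : (2 * i.+1 - 1 = 2 * i + 1)%N by lia.
Qed.

Lemma banded_Hmat : banded 1 H.
Proof.
move=> i j h; rewrite HmatE mxE /Hentry.
by repeat (case: ifP => ?; try (exfalso; lia)).
Qed.

Definition Hrow (f : nat -> nat -> R) (i j : nat) : R :=
  (if (0 < i)%N then Hentry i i.-1 * f i.-1 j else 0) + Hentry i i * f i j
  + (if (i.+1 < N)%N then Hentry i i.+1 * f i.+1 j else 0).

Lemma Hmat_mulmxE (f : nat -> nat -> R) :
  H *m \matrix_(i < N, j < N) f i j = \matrix_(i, j) Hrow f i j.
Proof.
have split_row (i k j : nat) : Hentry i k * f k j =
    (if (0 < i)%N then (if k == i.-1 then Hentry i k * f k j else 0) else 0)
    + (if k == i then Hentry i k * f k j else 0)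
    + (if k == i.+1 then Hentry i k * f k j else 0).
  rewrite /Hentry; case: (k =P i) => ?; case: (k =P i.+1) => ?; case: (i =P k.+1) => ?;
    case: (posnP i) => ?; case: (k =P i.-1) => ?;
    rewrite ?mul0r ?add0r ?addr0 //; exfalso; lia.
rewrite HmatE; apply/matrixP => i j; rewrite !mxE.
under eq_bigr => k _ do rewrite !mxE split_row.
pose g k := Hentry i k * f k j.
rewrite !big_split /= (sum_ord_if_eq _ i g) (sum_ord_if_eq _ i.+1 g) ltn_ord /Hrow.
case: (posnP i) => [i0|_]; first by rewrite big1_eq /g i0 !add0r.
rewrite (sum_ord_if_eq _ i.-1 g).
by have -> : (i.-1 < N)%N by have := ltn_ord i; lia.
Qed.

(* The singleton case avoids a trailing [Hrow] of the zero function, which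
   would only bloat the entry computations below. *)
Fixpoint horner_entry (cs : seq R) (i j : nat) : R :=
  match cs with
  | [::] => 0
  | [:: c] => if i == j then c else 0
  | c :: cs' => (if i == j then c else 0) + Hrow (horner_entry cs') i j
  end.

Lemma mxhornerE cs : mxhorner cs H = \matrix_(i, j) horner_entry cs i j.
Proof.
elim: cs => [|c [|c' cs] IH]; first by apply/matrixP => i j; rewrite !mxE.
  rewrite mxhorner_cons [mxhorner [::] _]/= mulmx0 addr0; apply/matrixP => i j.
  by rewrite !mxE /= -val_eqE; case: (_ == _).
rewrite mxhorner_cons IH Hmat_mulmxE; apply/matrixP => i j.
by rewrite !mxE /= -val_eqE; case: (_ == _).
Qed.

Lemma Dn1 : Dn a 1 = 1.
Proof. by rewrite /Dn big_geq. Qed.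

Lemma DnS n : Dn a n.+2 = Dn a n.+1 * (a + n.+1%:R).
Proof. by rewrite /Dn big_nat_recr. Qed.

Hypothesis a_gt0 : 0 < a.

Lemma Dn_gt0 n : 0 < Dn a n.
Proof. by rewrite /Dn prodr_gt0 // => k _; rewrite ltr_wpDr ?ler0n. Qed.

Lemma Dn_neq0 n : Dn a n != 0.
Proof. by rewrite gt_eqF ?Dn_gt0. Qed.

Lemma a_add_Sn_neq0 n : a + (1 + n%:R) != 0.
Proof. by rewrite gt_eqF // ltr_wpDr ?addr_ge0. Qed.

Definition theta (i : nat) : R := i`!%:R / Dn a i.+1.

Lemma theta_gt0 i : 0 < theta i.
Proof. by rewrite /theta divr_gt0 ?Dn_gt0 // ltr0n fact_gt0. Qed.

Lemma Theta0E : Theta0 N a = diag_mx (\row_i theta i).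
Proof. by apply/matrixP => i j; rewrite !mxE eq_sym; case: eqP. Qed.

Lemma Hentry_detailed_balance (i j : nat) : Hentry j i * theta j = theta i * Hentry i j.
Proof.
rewrite /Hentry /theta.
have [->|ji] := eqVneq j i; first by rewrite mulrC.
have [->|ij] := eqVneq i j.+1.
  case: ifP => [/eqP|_]; first lia.
  by rewrite DnS factS natrM; field; rewrite ?Dn_neq0 ?a_add_Sn_neq0.
have [->|jS] := eqVneq j i.+1; last by rewrite mul0r mulr0.
by rewrite DnS factS natrM; field; rewrite ?Dn_neq0 ?a_add_Sn_neq0.
Qed.

Lemma intertwines_Theta0 : intertwines H (Theta0 N a).
Proof.
rewrite /intertwines Theta0E mul_diag_mx mul_mx_diag HmatE.
by apply/matrixP => i j; rewrite !mxE Hentry_detailed_balance.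
Qed.

Lemma sym_Theta0 : sym_mx (Theta0 N a).
Proof. by rewrite /sym_mx Theta0E tr_diag_mx. Qed.

Lemma Theta0_mulmx_mxhornerE cs (i j : 'I_N) :
  (Theta0 N a *m mxhorner cs H) i j = theta i * horner_entry cs i j.
Proof. by rewrite Theta0E mul_diag_mx mxhornerE !mxE. Qed.

(* Resolve the guards innermost first, by [lia] when it decides them and by
   case analysis otherwise. *)
Ltac split_entry :=
  repeat match goal with
  | |- context [match ?b with true => ?x | false => ?y end] =>
      lazymatch x with context [if _ then _ else _] => fail | _ => idtac end;
      lazymatch y with context [if _ then _ else _] => fail | _ => idtac end;
      first [ rewrite (_ : b = true); last by lia
            | rewrite (_ : b = false); last by lia
            | case: (boolP b) => ?; try (exfalso; lia) ]
  end.

Lemma P1mat_laguerre : P1mat N a = Theta0 N a *m mxhorner [:: a + 1; -1] H.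
Proof.
apply/matrixP => i j; rewrite Theta0_mulmx_mxhornerE !mxE /= /Hrow /Hentry /theta.
move: (ltn_ord j); rewrite -val_eqE /=; move: (nat_of_ord i) (nat_of_ord j) => {}i {}j.
have [-> _|ji] := eqVneq j i.
  by case: i => [|i]; rewrite /= ?Dn1; split_entry; field; rewrite ?Dn_neq0.
have [-> iN|jS jN] := eqVneq j i.+1.
  by split_entry; rewrite factS natrM; field; rewrite ?Dn_neq0.
have [->|iS] := eqVneq i j.+1.
  by split_entry; rewrite DnS factS natrM; field; rewrite ?Dn_neq0 ?a_add_Sn_neq0.
by split_entry; ring.
Qed.

(* The coefficients of the generalized Laguerre polynomial L_3^(a). *)
Definition laguerre3 : seq R :=
  [:: (a + 1) * (a + 2) * (a + 3) / 6; - ((a + 2) * (a + 3) / 2); (a + 3) / 2; - (1 / 6)].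

Local Notation P3entry i j := (theta i * horner_entry laguerre3 i j).

Ltac laguerre3_entry :=
  rewrite /theta /horner_entry /= /Hrow /Hentry /=; split_entry;
  rewrite ?Dn1 ?fact0; field; rewrite ?Dn_neq0.

Lemma laguerre3_corner : (4 <= N)%N ->
  [/\ P3entry 0 0 = 0, P3entry 0 1 = 0, P3entry 0 2 = 0, P3entry 1 1 = 0
    & P3entry 0 3 = 1].
Proof. by move=> N4; split; laguerre3_entry. Qed.

Lemma laguerre3_diag n : (2 <= n)%N -> (n <= N - 1)%N ->
  P3entry n.-1 n.-1 = - ((2 * (n - 1) * (n - 2) * (n - 1)`!)%:R
                          * (3 * a + (5 * n - 6)%:R) / (3 * Dn a n)).
Proof.
case: n => [|[|m]] // _ mN; have {}mN : (m.+3 <= N)%N by lia.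
have -> : (5 * m.+2 - 6 = 5 * m + 4)%N by lia.
by rewrite !subSS !subn0 /=; laguerre3_entry.
Qed.

Lemma laguerre3_superdiag n : (2 <= n)%N -> (n <= N - 2)%N ->
  P3entry n.-1 n = ((n - 1) * n`!)%:R * (a + (5 * n - 7)%:R) / (2 * Dn a n).
Proof.
case: n => [|[|m]] // _ mN; have {}mN : (m.+4 <= N)%N by lia.
have -> : (5 * m.+2 - 7 = 5 * m + 3)%N by lia.
by rewrite /theta !subSS subn0 /= !factS !natrM; laguerre3_entry.
Qed.

Lemma laguerre3_superdiag2 n : (2 <= n)%N -> (n <= N - 2)%N ->
  P3entry n.-1 n.+1 = - (((n - 1) * n.+1`!)%:R / Dn a n).
Proof.
case: n => [|[|m]] // _ mN; have {}mN : (m.+4 <= N)%N by lia.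
by rewrite /theta !subSS subn0 /= !factS !natrM; laguerre3_entry.
Qed.

Lemma laguerre3_superdiag3 n : (2 <= n)%N -> (n <= N - 3)%N ->
  P3entry n.-1 n.+2 = n.+2`!%:R / (6 * Dn a n).
Proof.
case: n => [|[|m]] // _ mN; have {}mN : (m.+4 < N)%N by lia.
by rewrite /theta /= !factS !natrM; laguerre3_entry.
Qed.

Lemma P3_entries_laguerre3 : (4 <= N)%N ->
  P3_entries a (Theta0 N a *m mxhorner laguerre3 H).
Proof.
move=> N4; have [e00 e01 e02 e11 e03] := laguerre3_corner N4.
do 5?[split; first by move=> i j i0 j0; rewrite Theta0_mulmx_mxhornerE i0 j0].
do 3?split; move=> i j n ji n2 nN; rewrite Theta0_mulmx_mxhornerE ji.
- exact: laguerre3_diag n2 nN.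
- exact: laguerre3_superdiag n2 nN.
- exact: laguerre3_superdiag2 n2 nN.
- exact: laguerre3_superdiag3 n2 nN.
Qed.

End LaguerreMetric.

Theorem lemma4 (R : realType) (N : nat) (a : R) :
  (4 <= N)%N -> 0 < a ->
  exists P3 : 'M[R]_N,
    [/\ sym_mx P3, banded 3 P3, intertwines (Hmat N a) P3,
        P3_entries a P3 &
        forall P2 : 'M[R]_N,
          sym_mx P2 -> banded 2 P2 -> intertwines (Hmat N a) P2 ->
          (forall alpha beta gamma : R,
             intertwines (Hmat N a)
               (Theta0 N a + alpha *: P1mat N a + beta *: P2 + gamma *: P3)) /\
          (exists2 eps : R, 0 < eps &
             forall alpha beta gamma : R,
               `|alpha| < eps -> `|beta| < eps -> `|gamma| < eps ->
               is_metric (Hmat N a)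
                 (Theta0 N a + alpha *: P1mat N a + beta *: P2 + gamma *: P3))].
Proof.
move=> N4 a_gt0; set H := Hmat N a; set P3 := Theta0 N a *m mxhorner (laguerre3 a) H.
have symT := sym_Theta0 N a.
have intT : intertwines H (Theta0 N a) by exact: intertwines_Theta0.
have [symP1 intP1] : sym_mx (P1mat N a) /\ intertwines H (P1mat N a).
  rewrite (P1mat_laguerre N a_gt0).
  by split; [exact: sym_mx_mulmx_mxhorner | exact: intertwines_mulmx_mxhorner].
have symP3 : sym_mx P3 by exact: sym_mx_mulmx_mxhorner.
have intP3 : intertwines H P3 by exact: intertwines_mulmx_mxhorner.
exists P3; split => //.
- rewrite /P3 Theta0E /laguerre3.
  exact: banded_mulmx (banded_diag_mx _) (banded_mxhorner _ _ (banded_Hmat _)).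
- exact: P3_entries_laguerre3.
move=> P2 symP2 _ intP2.
have intTheta3 alpha beta gamma :
    intertwines H (Theta0 N a + alpha *: P1mat N a + beta *: P2 + gamma *: P3).
  by do !apply: intertwinesD => //; apply: intertwinesZ.
split=> //; rewrite Theta0E.
have theta_row_gt0 (i : 'I_N) : 0 < (\row_i theta a i) 0 i by rewrite mxE theta_gt0.
have [eps eps_gt0 small] := posdef_diag_small_perturbation theta_row_gt0 symP1 symP2 symP3.
by exists eps => // alpha beta gamma ha hb hc; split; [exact: small | rewrite -Theta0E].
Qed.
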